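(* Let $A(z)=\sum_{k=0}^{\infty}a_kz^k$ with $a_0\neq 0$ and $H(z)=\sum_{k=1}^{\infty}h_kz^k$ with $h_1\neq 0$ be analytic in a disk $|z|<R$ with $R>1$, with real coefficients. Let the Sheffer polynomials $p_k$ be defined by $A(t)e^{xH(t)}=\sum_{k=0}^{\infty}p_k(x)t^k$ for $|t|<R$, and assume $p_k(x)\ge 0$ for all $x\ge 0$ and all $k$, $A(1)\neq 0$ and $H'(1)=1$. Let $(b_n)$ be a positive increasing sequence with $b_n\to\infty$ and $b_n/n\to 0$, and define $$T_n^*(f;x)=\frac{e^{-\frac{n}{b_n}xH(1)}}{A(1)}\sum_{k=0}^{\infty}p_k\Big(\frac{n}{b_n}x\Big)f\Big(\frac{k}{n}b_n\Big).$$ Then for every $f\in C_E[0,\infty)$ and every $a>0$, $T_n^*(f;\cdot)\to f$ uniformly on $[0,a]$ as $n\to\infty$.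
   Context: $C_E[0,\infty)$ denotes the set of continuous functions $f$ on $[0,\infty)$ such that $|f(x)|\le \beta e^{\alpha x}$ for all $x\ge 0$, for some finite positive constants $\alpha,\beta$. *)

From Stdlib Require Import Reals Lra.
From Coquelicot Require Import Coquelicot.
Open Scope R_scope.

(* Power series with coefficients c converges absolutely on |z| < R
   (i.e. radius of convergence >= R: analytic in the disk |z| < R). *)
Definition abs_conv_on (c : nat -> R) (Rad : R) : Prop :=
  forall r, 0 <= r < Rad -> ex_series (fun k => Rabs (c k) * r ^ k).

Definition CE (f : R -> R) : Prop :=
  (forall x, 0 <= x ->
     filterlim f (within (fun y => 0 <= y) (locally x)) (locally (f x))) /\
  exists alpha beta, 0 < alpha /\ 0 < beta /\
     forall x, 0 <= x -> Rabs (f x) <= beta * exp (alpha * x).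

Definition Tstar (a h : nat -> R) (p : nat -> R -> R) (b : nat -> R)
  (n : nat) (f : R -> R) (x : R) : R :=
  exp (- (INR n / b n) * x * PSeries h 1) / PSeries a 1 *
  Series (fun k => p k (INR n / b n * x) * f (INR k / INR n * b n)).

From Stdlib Require Import Reals Lra Lia.
From Coquelicot Require Import Coquelicot.
Open Scope R_scope.

(* With m = n / b_n and y = m x, T_n^* averages f over the nodes k / m with the
   nonnegative weights p_k(y), whose total mass is G(1) = A(1) e^{y H(1)}.  Away from
   x, |f(k/m) - f(x)| is dominated by K e^{lam (|k/m - x| - d)}, and the exponential
   moments sum_k p_k(y) e^{+-lam k/m} are again values G(e^{+-lam/m}) of the generating
   function.  As H'(1) = 1 we have y (H(e^{c/m}) - H(1)) = c x + o(1) uniformly for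
   x in [0, a], so these moments are at most 6 e^{+-lam x} G(1) for large n, and a
   large lam makes their contribution small (a Chernoff-type bound). *)

Lemma exp_le_mono (x y : R) : x <= y -> exp x <= exp y.
Proof.
  intros Hxy. destruct (Req_dec x y) as [->|Hne]; [lra|].
  left; apply exp_increasing; lra.
Qed.

Lemma exp_mult_INR (k : nat) (u : R) : exp (INR k * u) = exp u ^ k.
Proof.
  induction k as [|k IH].
  - rewrite Rmult_0_l, exp_0. reflexivity.
  - rewrite S_INR, Rmult_plus_distr_r, Rmult_1_l, exp_plus, IH. simpl. ring.
Qed.

Lemma is_series_ext_R (u v : nat -> R) (l : R) :
  (forall k, u k = v k) -> is_series u l -> is_series v l.
Proof. exact (is_series_ext u v l). Qed.

Lemma is_series_pos (u : nat -> R) (l : R) :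
  (forall k, 0 <= u k) -> is_series u l -> l <> 0 -> 0 < l.
Proof.
  intros Hu Hl Hl0.
  assert (H0 : Series (fun k => 0 * u k) <= Series u).
  { apply Series_le; [intro k; rewrite Rmult_0_l; split; [lra| apply Hu]| exists l; exact Hl]. }
  rewrite Series_scal_l, (is_series_unique _ _ Hl) in H0. lra.
Qed.

Lemma weighted_sum_deviation (w t : nat -> R) (g : R -> R) (x G1 Gp Gm lam d eta K : R) :
  (forall k, 0 <= w k) ->
  is_series w G1 ->
  is_series (fun k => w k * exp (lam * t k)) Gp ->
  is_series (fun k => w k * exp (- lam * t k)) Gm ->
  (forall k, Rabs (g (t k) - g x)
     <= eta + K * exp (lam * (t k - x - d)) + K * exp (lam * (x - t k - d))) ->
  ex_series (fun k => w k * g (t k)) /\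
  Rabs (Series (fun k => w k * g (t k)) - g x * G1)
    <= eta * G1 + K * exp (- lam * d) * (exp (- lam * x) * Gp + exp (lam * x) * Gm).
Proof.
  intros Hw HG1 HGp HGm Hg.
  set (bound := fun k =>
    w k * (eta + K * exp (lam * (t k - x - d)) + K * exp (lam * (x - t k - d)))).
  set (dev := fun k => w k * (g (t k) - g x)).
  assert (Hbound : is_series bound
    (eta * G1 + K * exp (- lam * d) * (exp (- lam * x) * Gp + exp (lam * x) * Gm))).
  { apply (is_series_ext_R (fun k => eta * w k
       + (K * exp (- lam * d) * exp (- lam * x)) * (w k * exp (lam * t k))
       + (K * exp (- lam * d) * exp (lam * x)) * (w k * exp (- lam * t k)))).
    - intro k. unfold bound.
      replace (lam * (t k - x - d)) with (- lam * d + - lam * x + lam * t k) by ring.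
      replace (lam * (x - t k - d)) with (- lam * d + lam * x + - lam * t k) by ring.
      rewrite !exp_plus. ring.
    - replace (eta * G1 + K * exp (- lam * d) * (exp (- lam * x) * Gp + exp (lam * x) * Gm))
        with (eta * G1 + (K * exp (- lam * d) * exp (- lam * x)) * Gp
              + (K * exp (- lam * d) * exp (lam * x)) * Gm) by ring.
      exact (is_series_plus _ _ _ _
        (is_series_plus _ _ _ _ (is_series_scal _ _ _ HG1) (is_series_scal _ _ _ HGp))
        (is_series_scal _ _ _ HGm)). }
  assert (Hdev_le : forall k, Rabs (dev k) <= bound k).
  { intro k. unfold dev, bound. rewrite Rabs_mult, (Rabs_pos_eq (w k)) by apply Hw.
    apply Rmult_le_compat_l; [apply Hw| apply Hg]. }
  assert (Hdev_abs : ex_series (fun k => Rabs (dev k))).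
  { apply (ex_series_le (V := R_CompleteNormedModule) _ bound); [| eexists; exact Hbound].
    intro k. change (Rabs (Rabs (dev k)) <= bound k). rewrite Rabs_Rabsolu. apply Hdev_le. }
  assert (Hsum : is_series (fun k => w k * g (t k)) (Series dev + g x * G1)).
  { apply (is_series_ext_R (fun k => dev k + g x * w k)).
    - intro k. unfold dev. ring.
    - exact (is_series_plus _ _ _ _ (Series_correct _ (ex_series_Rabs _ Hdev_abs))
        (is_series_scal _ _ _ HG1)). }
  split; [eexists; exact Hsum|].
  rewrite (is_series_unique _ _ Hsum).
  replace (Series dev + g x * G1 - g x * G1) with (Series dev) by ring.
  eapply Rle_trans; [apply Series_Rabs; exact Hdev_abs|].
  rewrite <- (is_series_unique _ _ Hbound).
  apply Series_le; [| eexists; exact Hbound].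
  intro k. split; [apply Rabs_pos| apply Hdev_le].
Qed.

Lemma abs_conv_on_CV_radius (c : nat -> R) (Rad x : R) :
  abs_conv_on c Rad -> Rabs x < Rad -> Rbar_lt (Rabs x) (CV_radius c).
Proof.
  intros Hc Hx.
  set (r := (Rabs x + Rad) / 2).
  assert (Hr : Rbar_le r (CV_radius c)).
  { apply (proj1 (Lub_Rbar_correct (CV_disk c))).
    apply ex_series_ext with (fun k => Rabs (c k) * r ^ k).
    - intro k. rewrite Rabs_mult, <- RPow_abs, (Rabs_pos_eq r); [reflexivity|].
      unfold r; pose proof (Rabs_pos x); lra.
    - apply Hc. unfold r; pose proof (Rabs_pos x); lra. }
  destruct (CV_radius c) as [v| |]; simpl in *; try easy. unfold r in Hr; lra.
Qed.


Lemma is_derive_little_o (g : R -> R) (x l eps : R) :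
  is_derive g x l -> 0 < eps ->
  locally x (fun y => Rabs (g y - g x - l * (y - x)) <= eps * Rabs (y - x)).
Proof.
  intros [_ Hd] Heps.
  eapply filter_imp; [| exact (Hd x (fun P HP => HP) (mkposreal eps Heps))].
  intros y Hy. simpl in Hy. unfold minus, plus, opp, scal, norm in Hy; simpl in Hy.
  unfold mult, abs in Hy; simpl in Hy.
  replace (g y - g x - l * (y - x)) with (g y + - g x + - ((y + - x) * l)) by ring.
  exact Hy.
Qed.

Lemma near_exp0_bounds (Af Hf : R -> R) (eps : R) :
  continuity_pt Af 1 -> 0 < Af 1 -> is_derive Hf 1 1 -> 0 < eps ->
  locally 0 (fun u => Af (exp u) < 2 * Af 1 /\
                      Rabs (Hf (exp u) - Hf 1 - u) <= eps * Rabs u).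
Proof.
  intros HAc HA1 HHd Heps.
  apply filter_and.
  - assert (HAexp : continuity_pt (fun u => Af (exp u)) 0).
    { apply (continuity_pt_comp exp Af);
        [apply derivable_continuous_pt, derivable_pt_exp| rewrite exp_0; exact HAc]. }
    eapply filter_imp; [| exact (proj1 (continuity_pt_locally _ _) HAexp (mkposreal _ HA1))].
    intros u Hu. simpl in Hu. rewrite exp_0 in Hu.
    apply Rabs_lt_between' in Hu. lra.
  - assert (HHexp : is_derive (fun u => Hf (exp u)) 0 1).
    { rewrite <- exp_0 in HHd at 1.
      pose proof (is_derive_comp Hf exp 0 1 (exp 0) HHd (is_derive_exp 0)) as H.
      rewrite exp_0 in H. unfold scal in H; simpl in H; unfold mult in H; simpl in H.
      rewrite Rmult_1_l in H. exact H. }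
    eapply filter_imp; [| exact (is_derive_little_o _ 0 1 eps HHexp Heps)].
    intros u Hu. simpl in Hu. rewrite !Rminus_0_r, Rmult_1_l, exp_0 in Hu. exact Hu.
Qed.

Lemma filterlim_div_p_infty (c : R) :
  filterlim (fun m => c / m) (Rbar_locally p_infty) (locally 0).
Proof.
  assert (H : is_lim (fun m => c * / m) p_infty (Rbar_mult c 0)).
  { apply is_lim_scal_l. apply (is_lim_inv (fun m => m) p_infty p_infty);
      [apply is_lim_id| discriminate]. }
  rewrite Rbar_mult_0_r in H. exact H.
Qed.

Lemma exp_div_lt_eventually (c r : R) :
  1 < r -> Rbar_locally p_infty (fun m => exp (c / m) < r).
Proof.
  intros Hr. apply (filterlim_div_p_infty c (fun u => exp u < r)).
  apply (locally_pt_comp (fun s => s < r) exp 0).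
  - rewrite exp_0. exact (open_lt r 1 Hr).
  - apply derivable_continuous_pt, derivable_pt_exp.
Qed.

Definition sheffer_gf (Af Hf : R -> R) (t y : R) : R := Af t * exp (y * Hf t).

Lemma sheffer_gf_tilt_bound (Af Hf : R -> R) (c A : R) :
  continuity_pt Af 1 -> 0 < Af 1 -> is_derive Hf 1 1 -> 0 <= A ->
  Rbar_locally p_infty (fun m => forall x, 0 <= x <= A ->
    exp (- c * x) * sheffer_gf Af Hf (exp (c / m)) (m * x)
    <= 6 * sheffer_gf Af Hf 1 (m * x)).
Proof.
  intros HAc HA1 HHd HA.
  (* small enough that the error term r below, of size at most x |c| eps, is <= 1 *)
  set (eps := / ((A + 1) * (Rabs c + 1))).
  assert (Hc : 0 <= Rabs c) by apply Rabs_pos.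
  assert (Heps : 0 < eps) by (apply Rinv_0_lt_compat; nra).
  assert (Hpos : Rbar_locally p_infty (fun m => 0 < m)) by (exists 0; auto).
  eapply filter_imp; [| exact (filter_and _ _ Hpos
    (filterlim_div_p_infty c _ (near_exp0_bounds Af Hf eps HAc HA1 HHd Heps)))].
  intros m [Hm [HAu HHu]] x Hx. unfold sheffer_gf.
  set (u := c / m) in *.
  set (r := m * x * (Hf (exp u) - Hf 1 - u)).
  assert (Hr : r <= 1).
  { apply Rle_trans with (Rabs r); [apply Rle_abs|].
    unfold r. rewrite !Rabs_mult, (Rabs_pos_eq m), (Rabs_pos_eq x) by lra.
    apply Rle_trans with (m * x * (eps * Rabs u)); [apply Rmult_le_compat_l; nra|].
    assert (Hmu : m * Rabs u = Rabs c).
    { unfold u. rewrite Rabs_div by lra. rewrite (Rabs_pos_eq m) by lra. field. lra. }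
    assert (HeA : eps * (A * Rabs c) <= 1).
    { apply Rle_trans with (eps * ((A + 1) * (Rabs c + 1))); [apply Rmult_le_compat_l; nra|].
      unfold eps. rewrite Rinv_l by nra. lra. }
    replace (m * x * (eps * Rabs u)) with (eps * x * (m * Rabs u)) by ring.
    rewrite Hmu. apply Rle_trans with (eps * (A * Rabs c)); [|exact HeA].
    replace (eps * x * Rabs c) with (eps * (x * Rabs c)) by ring.
    apply Rmult_le_compat_l; nra. }
  assert (Hsplit : exp (- c * x) * exp (m * x * Hf (exp u)) = exp (m * x * Hf 1) * exp r).
  { rewrite <- !exp_plus. f_equal. unfold r, u. field. lra. }
  assert (Hexpr : exp r <= 3).
  { apply Rle_trans with (exp 1); [apply exp_le_mono; exact Hr| apply exp_le_3]. }
  pose proof (exp_pos r). pose proof (exp_pos (m * x * Hf 1)).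
  replace (exp (- c * x) * (Af (exp u) * exp (m * x * Hf (exp u))))
    with (Af (exp u) * (exp (- c * x) * exp (m * x * Hf (exp u)))) by ring.
  rewrite Hsplit.
  set (E := exp (m * x * Hf 1)) in *.
  assert (HAE : 0 < Af 1 * E) by nra.
  destruct (Rle_or_lt (Af (exp u)) 0) as [Hneg|Hpos'].
  - assert (Af (exp u) * (E * exp r) <= 0) by (apply Rmult_le_0_r; nra). lra.
  - replace (Af (exp u) * (E * exp r)) with ((Af (exp u) * E) * exp r) by ring.
    apply Rle_trans with ((2 * Af 1 * E) * 3); [apply Rmult_le_compat; nra| lra].
Qed.

Lemma Rmax_0_lipschitz (y z : R) : Rabs (Rmax 0 y - Rmax 0 z) <= Rabs (y - z).
Proof.
  unfold Rmax; destruct (Rle_dec 0 y), (Rle_dec 0 z);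
    unfold Rabs; repeat destruct Rcase_abs; lra.
Qed.

Lemma uniform_continuity_half_line (f : R -> R) (A eta : R) :
  (forall x, 0 <= x ->
     filterlim f (within (fun y => 0 <= y) (locally x)) (locally (f x))) ->
  0 <= A -> 0 < eta ->
  exists d, 0 < d <= 1 /\ forall x t, 0 <= x <= A -> 0 <= t ->
    Rabs (t - x) < d -> Rabs (f t - f x) < eta.
Proof.
  intros Hc HA Heta.
  (* f (Rmax 0 .) is continuous on all of R, so Heine applies on [0, A + 1] *)
  set (g := fun t => f (Rmax 0 t)).
  assert (Hg : forall t, continuity_pt g t).
  { intro t. apply continuity_pt_filterlim. unfold g.
    eapply filterlim_comp; [| apply (Hc (Rmax 0 t)), Rmax_l].
    intros Q [e HQ]. exists e. intros y Hy. apply HQ; [| apply Rmax_l].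
    change (Rabs (Rmax 0 y - Rmax 0 t) < e).
    eapply Rle_lt_trans; [apply Rmax_0_lipschitz| exact Hy]. }
  destruct (Heine_cor2 (f := g) (a := 0) (b := A + 1) (fun x _ => Hg x)
              (mkposreal eta Heta)) as [del Hdel].
  exists (Rmin del 1).
  split; [split; [apply Rmin_pos; [apply cond_pos| lra]| apply Rmin_r]|].
  intros x t Hx Ht Htx.
  pose proof (Rmin_l del 1). pose proof (Rmin_r del 1).
  assert (Hgt : g t = f t) by (unfold g; rewrite Rmax_right; lra).
  assert (Hgx : g x = f x) by (unfold g; rewrite Rmax_right; lra).
  rewrite <- Hgt, <- Hgx. apply Hdel; try lra.
  apply Rabs_lt_between' in Htx. lra.
Qed.

Lemma exp_growth_deviation (f : R -> R) (al be A d eta lam : R) :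
  0 <= al -> 0 <= be -> (forall t, 0 <= t -> Rabs (f t) <= be * exp (al * t)) ->
  0 < d <= 1 -> 0 <= eta -> al <= lam ->
  (forall x t, 0 <= x <= A -> 0 <= t -> Rabs (t - x) < d -> Rabs (f t - f x) < eta) ->
  forall x, 0 <= x <= A -> forall t, 0 <= t ->
  Rabs (f t - f x) <= eta + 2 * be * exp (al * (A + 1)) * exp (lam * (t - x - d))
                         + 2 * be * exp (al * (A + 1)) * exp (lam * (x - t - d)).
Proof.
  intros Hal Hbe Hgrowth Hd Heta Hlam Hunif x Hx t Ht.
  set (K := 2 * be * exp (al * (A + 1))).
  assert (HK : 0 <= K) by (unfold K; pose proof (exp_pos (al * (A + 1))); nra).
  pose proof (exp_pos (lam * (t - x - d))). pose proof (exp_pos (lam * (x - t - d))).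
  assert (Htri : Rabs (f t - f x) <= be * exp (al * t) + be * exp (al * x)).
  { unfold Rminus. eapply Rle_trans; [apply Rabs_triang|]. rewrite Rabs_Ropp.
    pose proof (Hgrowth t Ht). pose proof (Hgrowth x (proj1 Hx)). lra. }
  destruct (Rlt_dec (Rabs (t - x)) d) as [Hnear|Hfar].
  - pose proof (Hunif x t Hx Ht Hnear). nra.
  - destruct (Rle_dec (x + d) t) as [Hright|Hleft].
    + assert (Hax : exp (al * x) <= exp (al * t)) by (apply exp_le_mono; nra).
      assert (Hat : exp (al * t) <= exp (al * (A + 1)) * exp (al * (t - x - d))).
      { rewrite <- exp_plus. apply exp_le_mono. nra. }
      assert (Hal_lam : exp (al * (t - x - d)) <= exp (lam * (t - x - d)))
        by (apply exp_le_mono; nra).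
      assert (2 * be * exp (al * t) <= K * exp (lam * (t - x - d))).
      { unfold K. pose proof (exp_pos (al * (A + 1))).
        apply Rle_trans with (2 * be * (exp (al * (A + 1)) * exp (al * (t - x - d)))).
        - apply Rmult_le_compat_l; lra.
        - rewrite <- Rmult_assoc. apply Rmult_le_compat_l; nra. }
      nra.
    + assert (Hleft' : t <= x - d) by (unfold Rabs in Hfar; destruct Rcase_abs; lra).
      assert (exp (al * t) <= exp (al * (A + 1))) by (apply exp_le_mono; nra).
      assert (exp (al * x) <= exp (al * (A + 1))) by (apply exp_le_mono; nra).
      assert (1 <= exp (lam * (x - t - d))) by (rewrite <- exp_0; apply exp_le_mono; nra).
      assert (Rabs (f t - f x) <= K) by (unfold K; nra).
      nra.
Qed.

Lemma exists_exp_decay (K d delta al : R) :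
  0 <= K -> 0 < d -> 0 < delta -> exists lam, al <= lam /\ K * exp (- lam * d) <= delta.
Proof.
  intros HK Hd Hdelta.
  set (lam := Rmax al 0 + K / (delta * d)).
  assert (HKd : 0 <= K / (delta * d)) by (apply Rdiv_le_0_compat; nra).
  exists lam. split; [pose proof (Rmax_l al 0); unfold lam; lra|].
  assert (Hlamd : K <= delta * (lam * d)).
  { unfold lam. pose proof (Rmax_r al 0).
    replace (delta * ((Rmax al 0 + K / (delta * d)) * d))
      with (delta * d * Rmax al 0 + K) by (field; lra).
    assert (0 <= delta * d * Rmax al 0) by (apply Rmult_le_pos; nra). lra. }
  pose proof (exp_ineq1_le (lam * d)).
  replace (- lam * d) with (- (lam * d)) by ring. rewrite exp_Ropp.
  pose proof (exp_pos (lam * d)).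
  apply Rmult_le_reg_r with (exp (lam * d)); [lra|].
  rewrite Rmult_assoc, Rinv_l by lra. nra.
Qed.

Lemma is_lim_seq_ratio_p_infty (b : nat -> R) :
  (forall n, 0 < b n) -> is_lim_seq (fun n => b n / INR n) 0 ->
  is_lim_seq (fun n => INR n / b n) p_infty.
Proof.
  intros Hb Hlim. apply is_lim_seq_spec. intro M.
  apply is_lim_seq_spec in Hlim.
  assert (Heps : 0 < / (Rabs M + 1))
    by (apply Rinv_0_lt_compat; pose proof (Rabs_pos M); lra).
  destruct (Hlim (mkposreal _ Heps)) as [N HN].
  exists (S N). intros n Hn.
  assert (Hn0 : 0 < INR n) by (apply lt_0_INR; lia).
  specialize (HN n ltac:(lia)). simpl in HN.
  rewrite Rminus_0_r, Rabs_pos_eq in HN by (apply Rlt_le, Rdiv_lt_0_compat; auto).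
  pose proof (Hb n). pose proof (Rle_abs M).
  replace (INR n / b n) with (/ (b n / INR n)) by (field; lra).
  apply Rlt_le_trans with (Rabs M + 1); [lra|].
  rewrite <- (Rinv_inv (Rabs M + 1)).
  apply Rinv_le_contravar; [apply Rdiv_lt_0_compat; lra| lra].
Qed.

Section Sheffer.

Variables (a h : nat -> R) (p : nat -> R -> R) (Rad : R).
Hypothesis Hsheffer : forall x t, Rabs t < Rad ->
  is_series (fun k => p k x * t ^ k) (PSeries a t * exp (x * PSeries h t)).
Hypothesis Hp_nonneg : forall k x, 0 <= x -> 0 <= p k x.
Hypothesis HRad : 1 < Rad.

Lemma sheffer_A1_pos : PSeries a 1 <> 0 -> 0 < PSeries a 1.
Proof.
  intros HA1.
  assert (H := Hsheffer 0 1 ltac:(rewrite Rabs_R1; lra)).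
  rewrite Rmult_0_l, exp_0, Rmult_1_r in H.
  apply (is_series_pos _ _ (fun k => Rmult_le_pos _ _ (Hp_nonneg k 0 (Rle_refl 0))
                                      (pow_le 1 k Rle_0_1)) H HA1).
Qed.

Lemma sheffer_tilted_series (c m y : R) : exp (c / m) < Rad ->
  is_series (fun k => p k y * exp (c * (INR k / m)))
            (sheffer_gf (PSeries a) (PSeries h) (exp (c / m)) y).
Proof.
  intros Hs.
  apply (is_series_ext_R (fun k => p k y * exp (c / m) ^ k)).
  - intro k. rewrite <- exp_mult_INR. do 2 f_equal. unfold Rdiv. ring.
  - apply Hsheffer. rewrite Rabs_pos_eq; [exact Hs| apply Rlt_le, exp_pos].
Qed.

Lemma Tstar_deviation (b : nat -> R) (f : R -> R) (n : nat) (x lam d eta K : R) :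
  0 < PSeries a 1 -> 0 < b n -> 0 < INR n -> 0 <= x -> 0 <= K ->
  exp (lam / (INR n / b n)) < Rad -> exp (- lam / (INR n / b n)) < Rad ->
  exp (- lam * x)
    * sheffer_gf (PSeries a) (PSeries h) (exp (lam / (INR n / b n))) (INR n / b n * x)
    <= 6 * sheffer_gf (PSeries a) (PSeries h) 1 (INR n / b n * x) ->
  exp (- - lam * x)
    * sheffer_gf (PSeries a) (PSeries h) (exp (- lam / (INR n / b n))) (INR n / b n * x)
    <= 6 * sheffer_gf (PSeries a) (PSeries h) 1 (INR n / b n * x) ->
  (forall t, 0 <= t ->
     Rabs (f t - f x) <= eta + K * exp (lam * (t - x - d)) + K * exp (lam * (x - t - d))) ->
  ex_series (fun k => p k (INR n / b n * x) * f (INR k / INR n * b n)) /\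
  Rabs (Tstar a h p b n f x - f x) <= eta + 12 * (K * exp (- lam * d)).
Proof.
  intros HA1 Hb Hn Hx HK Hsp Hsm Htilt_p Htilt_m Hf.
  set (m := INR n / b n) in *.
  assert (Hm : 0 < m) by (apply Rdiv_lt_0_compat; lra).
  set (y := m * x) in *.
  set (t := fun k => INR k / INR n * b n).
  assert (Ht : forall k, INR k / m = t k) by (intro k; unfold t, m; field; lra).
  assert (Ht_nonneg : forall k, 0 <= t k).
  { intro k. rewrite <- Ht. apply Rdiv_le_0_compat; [apply pos_INR| exact Hm]. }
  set (G := sheffer_gf (PSeries a) (PSeries h)).
  assert (HG1 : 0 < G 1 y) by (apply Rmult_lt_0_compat; [exact HA1| apply exp_pos]).
  assert (Hsum1 : is_series (fun k => p k y) (G 1 y)).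
  { apply (is_series_ext_R (fun k => p k y * 1 ^ k)); [intro k; rewrite pow1; ring|].
    apply Hsheffer. rewrite Rabs_R1. exact HRad. }
  assert (Hsum_p : is_series (fun k => p k y * exp (lam * t k))
                             (G (exp (lam / m)) y)).
  { apply (is_series_ext_R (fun k => p k y * exp (lam * (INR k / m))));
      [intro k; rewrite Ht; reflexivity| exact (sheffer_tilted_series lam m y Hsp)]. }
  assert (Hsum_m : is_series (fun k => p k y * exp (- lam * t k))
                             (G (exp (- lam / m)) y)).
  { apply (is_series_ext_R (fun k => p k y * exp (- lam * (INR k / m))));
      [intro k; rewrite Ht; reflexivity| exact (sheffer_tilted_series (- lam) m y Hsm)]. }
  destruct (weighted_sum_deviation (fun k => p k y) t f x _ _ _ lam d eta K
              (fun k => Hp_nonneg k y ltac:(unfold y; nra)) Hsum1 Hsum_p Hsum_m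
              (fun k => Hf (t k) (Ht_nonneg k))) as [Hex Hdev].
  split; [exact Hex|].
  assert (HTstar : Tstar a h p b n f x - f x
                   = (Series (fun k => p k y * f (t k)) - f x * G 1 y) / G 1 y).
  { unfold Tstar. fold m y t. unfold G, sheffer_gf.
    replace (- m * x * PSeries h 1) with (- (y * PSeries h 1)) by (unfold y; ring).
    change (fun k => p k y * f (INR k / INR n * b n)) with (fun k => p k y * f (t k)).
    rewrite exp_Ropp. field. split; [apply Rgt_not_eq, exp_pos| lra]. }
  rewrite HTstar, Rabs_div, (Rabs_pos_eq (G 1 y)) by lra.
  apply Rle_div_l; [exact HG1|].
  rewrite Ropp_involutive in Htilt_m. fold G in Htilt_p, Htilt_m.
  assert (Hdecay : 0 <= K * exp (- lam * d)) by (pose proof (exp_pos (- lam * d)); nra).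
  assert (K * exp (- lam * d) * (exp (- lam * x) * G (exp (lam / m)) y
            + exp (lam * x) * G (exp (- lam / m)) y) <= K * exp (- lam * d) * (12 * G 1 y))
    by (apply Rmult_le_compat_l; [exact Hdecay| lra]).
  lra.
Qed.

Lemma Tstar_deviation_eventually (b : nat -> R) (f : R -> R) (A lam d eta K : R) :
  continuity_pt (PSeries a) 1 -> 0 < PSeries a 1 -> is_derive (PSeries h) 1 1 ->
  (forall n, 0 < b n) -> is_lim_seq (fun n => INR n / b n) p_infty -> 0 <= A -> 0 <= K ->
  (forall x, 0 <= x <= A -> forall t, 0 <= t ->
     Rabs (f t - f x) <= eta + K * exp (lam * (t - x - d)) + K * exp (lam * (x - t - d))) ->
  eventually (fun n => forall x, 0 <= x <= A ->
    ex_series (fun k => p k (INR n / b n * x) * f (INR k / INR n * b n)) /\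
    Rabs (Tstar a h p b n f x - f x) <= eta + 12 * (K * exp (- lam * d))).
Proof.
  intros HAc HA1 HH1 Hb Hm HA HK Hf.
  set (tilt c m := forall x, 0 <= x <= A ->
    exp (- c * x) * sheffer_gf (PSeries a) (PSeries h) (exp (c / m)) (m * x)
    <= 6 * sheffer_gf (PSeries a) (PSeries h) 1 (m * x)).
  assert (Hevent : Rbar_locally p_infty (fun m =>
    (exp (lam / m) < Rad /\ exp (- lam / m) < Rad) /\ (tilt lam m /\ tilt (- lam) m))).
  { repeat apply filter_and; try apply exp_div_lt_eventually; try exact HRad;
      apply sheffer_gf_tilt_bound; assumption. }
  destruct (Hm _ Hevent) as [N HN].
  exists (S N). intros n Hn x Hx.
  destruct (HN n ltac:(lia)) as [[Hsp Hsm] [Htilt_p Htilt_m]].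
  assert (Hn0 : 0 < INR n) by (apply lt_0_INR; lia).
  exact (Tstar_deviation b f n x lam d eta K HA1 (Hb n) Hn0 (proj1 Hx) HK Hsp Hsm
           (Htilt_p x Hx) (Htilt_m x Hx) (Hf x Hx)).
Qed.

End Sheffer.

Theorem theorem2p2
  (a h : nat -> R) (Rad : R) (p : nat -> R -> R) (b : nat -> R) :
  1 < Rad ->
  abs_conv_on a Rad -> abs_conv_on h Rad ->
  a 0%nat <> 0 -> h 0%nat = 0 -> h 1%nat <> 0 ->
  (* Sheffer polynomials: A(t) e^{x H(t)} = sum_k p_k(x) t^k for |t| < R *)
  (forall x t, Rabs t < Rad ->
     is_series (fun k => p k x * t ^ k) (PSeries a t * exp (x * PSeries h t))) ->
  (forall k x, 0 <= x -> 0 <= p k x) ->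
  PSeries a 1 <> 0 ->
  is_derive (PSeries h) 1 1 ->
  (forall n, 0 < b n) ->
  (forall n, b n < b (S n)) ->
  is_lim_seq b p_infty ->
  is_lim_seq (fun n => b n / INR n) 0 ->
  forall f, CE f ->
  forall A, 0 < A ->
  forall eps, 0 < eps ->
  exists N : nat, forall n : nat, (N <= n)%nat ->
    forall x, 0 <= x <= A ->
      ex_series (fun k => p k (INR n / b n * x) * f (INR k / INR n * b n)) /\
      Rabs (Tstar a h p b n f x - f x) < eps.
Proof.
  intros HRad Ha _ _ _ _ Hsheffer Hp HA1 HH1 Hb _ _ Hb_sublin
    f [Hf [al [be [Hal [Hbe Hgrowth]]]]] A HA eps Heps.
  pose proof (sheffer_A1_pos a h p Rad Hsheffer Hp HRad HA1) as HA1_pos.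
  assert (HAc : continuity_pt (PSeries a) 1).
  { apply PSeries_continuity, (abs_conv_on_CV_radius a Rad); [exact Ha|].
    rewrite Rabs_R1. exact HRad. }
  destruct (uniform_continuity_half_line f A (eps / 3) Hf ltac:(lra) ltac:(lra))
    as [d [Hd Hunif]].
  set (K := 2 * be * exp (al * (A + 1))).
  assert (HK : 0 <= K) by (unfold K; pose proof (exp_pos (al * (A + 1))); nra).
  destruct (exists_exp_decay K d (eps / 36) al HK ltac:(lra) ltac:(lra))
    as [lam [Hlam Hdecay]].
  destruct (Tstar_deviation_eventually a h p Rad Hsheffer Hp HRad b f A lam d (eps / 3) K
              HAc HA1_pos HH1 Hb (is_lim_seq_ratio_p_infty b Hb Hb_sublin) ltac:(lra) HK
              (exp_growth_deviation f al be A d (eps / 3) lam ltac:(lra) ltac:(lra)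
                 Hgrowth Hd ltac:(lra) Hlam Hunif)) as [N HN].
  exists N. intros n Hn x Hx.
  destruct (HN n Hn x Hx) as [Hex Hclose].
  split; [exact Hex| lra].
Qed.
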